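(* Let $n\ge1$, let $f_1,\dots,f_n:\mathbb{R}^d\to\mathbb{R}$ be $L$-smooth (i.e. $\|\nabla f_i(x)-\nabla f_i(y)\|\le L\|x-y\|$ for all $x,y$), and $f=\frac1n\sum_i f_i$. Let $x_0,\dots,x_{T-1}$, $\nabla_0,\dots,\nabla_{T-1}$ and $\gamma_0,\dots,\gamma_{T-1}$ be the iterates, gradient estimators and step-sizes produced by AdaSpider (described in the context) with input $x_0$, $\beta_0>0$, $G_0>0$. Then \[ \mathbb{E}\Big[\sum_{t=0}^{T-1}\gamma_t\|\nabla_t-\nabla f(x_t)\|^2\Big]\le L^2n\,\mathbb{E}\Big[\sum_{t=0}^{T-1}\gamma_t^3\|\nabla_t\|^2\Big]. \]
   Context: $\|\cdot\|$ is the Euclidean norm. AdaSpider: input $x_0\in\mathbb{R}^d$, $\beta_0>0$, $G_0>0$, horizon $T\ge1$. For $t=0,1,\dots,T-1$: if $t \bmod n=0$, set $\nabla_t:=\nabla f(x_t)$; otherwise pick $i_t\in\{1,\dots,n\}$ uniformly at random (independently of the past) and set $\nabla_t:=\nabla f_{i_t}(x_t)-\nabla f_{i_t}(x_{t-1})+\nabla_{t-1}$. Then set $\gamma_t:=1\big/\big(n^{1/4}\beta_0\sqrt{n^{1/2}G_0^2+\sum_{s=0}^t\|\nabla_s\|^2}\big)$ and $x_{t+1}:=x_t-\gamma_t\nabla_t$. *)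

From HB Require Import structures.
From mathcomp Require Import all_boot all_order all_algebra.
From mathcomp Require Import all_classical all_reals all_analysis.
Set Implicit Arguments. Unset Strict Implicit. Unset Printing Implicit Defensive.
Import Order.TTheory GRing.Theory Num.Theory.
Local Open Scope ring_scope.

Section AdaSpider.
Variables (R : realType) (d n : nat).
Notation vec := 'rV[R]_d.

Definition dotv (u v : vec) : R := \sum_(j < d) u ord0 j * v ord0 j.
Definition sqnorm (v : vec) : R := dotv v v.
Definition enorm (v : vec) : R := Num.sqrt (sqnorm v).

Definition is_gradient (h : vec -> R) (g : vec -> vec) : Prop :=
  forall x, differentiable h x /\ forall v, 'd h x v = dotv v (g x).

Definition lipschitz_grad (L : R) (g : vec -> vec) : Prop :=
  forall x y, enorm (g x - g y) <= L * enorm (x - y).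

(** gradient of f = (1/n) sum_i f_i, given the gradients G i of the f_i *)
Definition avg_grad (G : 'I_n -> vec -> vec) (x : vec) : vec :=
  n%:R^-1 *: \sum_(i < n) G i x.

(** step size from the running sum S_t = sum_{s<=t} ||nabla_s||^2 *)
Definition ada_step (beta0 G0 Ssum : R) : R :=
  1 / (Num.sqrt (Num.sqrt n%:R) * beta0 *
       Num.sqrt (Num.sqrt n%:R * G0 ^+ 2 + Ssum)).

(** State at time t: (x_t, nabla_t, S_t), given the sampled indices
    w t = i_t (only used when t mod n <> 0). *)
Fixpoint ada_state (G : 'I_n -> vec -> vec) (x0 : vec) (beta0 G0 : R)
    (w : nat -> 'I_n) (t : nat) : vec * vec * R :=
  match t with
  | 0 => let g := avg_grad G x0 in (x0, g, sqnorm g)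
  | t'.+1 =>
      let: (x, g, Ssum) := ada_state G x0 beta0 G0 w t' in
      let x' := x - ada_step beta0 G0 Ssum *: g in
      let g' := if (t'.+1 %% n == 0)%N then avg_grad G x'
                else G (w t'.+1) x' - G (w t'.+1) x + g in
      (x', g', Ssum + sqnorm g')
  end.

Definition ada_x G x0 beta0 G0 w t := (ada_state G x0 beta0 G0 w t).1.1.
Definition ada_nabla G x0 beta0 G0 w t := (ada_state G x0 beta0 G0 w t).1.2.
Definition ada_gamma G x0 beta0 G0 w t :=
  ada_step beta0 G0 (ada_state G x0 beta0 G0 w t).2.

(** The random indices: omega : {ffun 'I_T -> 'I_n} drawn uniformly, i.e.
    i_0,...,i_{T-1} i.i.d. uniform on {1..n} (here 'I_n = {0..n-1}). *)
Definition pick_idx (T : nat) (hn : (0 < n)%N) (omega : {ffun 'I_T -> 'I_n})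
    (t : nat) : 'I_n :=
  if insub t is Some j then omega j else Ordinal hn.

Definition Eunif (T : nat) (X : {ffun 'I_T -> 'I_n} -> R) : R :=
  (\sum_(omega : {ffun 'I_T -> 'I_n}) X omega) /
    #|{: {ffun 'I_T -> 'I_n}}|%:R.

End AdaSpider.

From HB Require Import structures.
From mathcomp Require Import all_boot all_order all_algebra.
From mathcomp Require Import all_classical all_reals all_analysis.
From mathcomp Require Import zify ring lra.
Import Order.TTheory GRing.Theory Num.Theory.
Set Implicit Arguments. Unset Strict Implicit. Unset Printing Implicit Defensive.
Local Open Scope ring_scope.

(* The error e_t = nabla_t - grad f(x_t) vanishes at every restart t = 0 mod n.
   Between restarts, e_(t+1) = e_t + D_i - mean_j D_j with
   D_i = G_i(x_(t+1)) - G_i(x_t) and i = i_(t+1) fresh and uniform, so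
   averaging over i gives E|e_(t+1)|^2 <= E|e_t|^2 + E|D_i|^2, where
   |D_i| <= L |x_(t+1) - x_t| = L gamma_t |nabla_t|.
   Multiplying by gamma_(t+1) <= gamma_t, the sequence u_t = E[gamma_t |e_t|^2]
   satisfies u_(t+1) <= u_t + L^2 E[gamma_t^3 |nabla_t|^2] inside an epoch, and
   each increment is counted in at most n of the u_t, whence the factor n. *)

Lemma sum_delayed_le (R : realDomainType) (b : nat -> R) (k T : nat) :
  (forall t, 0 <= b t) ->
  \sum_(t < T | (k < t)%N) b (t - k.+1)%N <= \sum_(t < T) b t.
Proof.
move=> b_ge0; rewrite -(big_mkord xpredT b).
rewrite -(big_mkord (fun t => k < t)%N (fun t => b (t - k.+1)%N)).
have [leTk|ltkT] := leqP T k.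
  by rewrite big_nat_cond big_pred0 ?sumr_ge0 // => t; apply/andP; lia.
rewrite (big_cat_nat _ (n := k.+1)) //= big_nat_cond big_pred0; last first.
  by move=> t; apply/andP; lia.
rewrite add0r -{1}[k.+1]add0n big_addn.
under eq_bigl do rewrite ltn_addl //.
under eq_bigr do rewrite addnK.
rewrite (big_nat_widen _ _ T) ?leq_subr // big_mkcond /=.
by apply: ler_sum_nat => t _; case: ifP.
Qed.

(* u_t is bounded by the sum of b over the part of its epoch before t, and each
   b_s occurs in at most n of these windows. *)
Lemma sum_restarted_le (R : realDomainType) (n T : nat) (u b : nat -> R) :
  (0 < n)%N -> (forall t, 0 <= b t) ->
  (forall t, (t %% n == 0)%N -> u t <= 0) ->
  (forall t, (t.+1 < T)%N -> (t.+1 %% n != 0)%N -> u t.+1 <= u t + b t) ->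
  \sum_(t < T) u t <= n%:R * \sum_(t < T) b t.
Proof.
move=> n_gt0 b_ge0 u_restart u_succ.
pose window t := \sum_(k < t %% n) b (t - k.+1)%N.
have u_le_window t : (t < T)%N -> u t <= window t.
  elim: t => [_|t IHt ltT].
    by rewrite /window mod0n big_ord0 u_restart ?mod0n.
  have [t1_mod|t1_mod] := boolP (t.+1 %% n == 0)%N.
    by rewrite (le_trans (u_restart _ t1_mod)) ?sumr_ge0.
  rewrite (le_trans (u_succ t ltT t1_mod)) // /window.
  have -> : (t.+1 %% n = (t %% n).+1)%N.
    by move: t1_mod; rewrite modnS; case: ifP.
  rewrite big_ord_recl addrC; apply: lerD; first by rewrite subn1.
  exact: IHt (ltnW ltT).
have window_le t : window t <= \sum_(k < n | (k < t)%N) b (t - k.+1)%N.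
  have le_tn_n := ltnW (ltn_pmod t n_gt0).
  rewrite /window (big_ord_widen n (fun k => b (t - k.+1)%N) le_tn_n).
  rewrite [leRHS]big_mkcond [leLHS]big_mkcond /=; apply: ler_sum => k _.
  case: ifP => [lt_k_tn|_]; last by case: ifP.
  by rewrite (leq_trans lt_k_tn (leq_mod t n)).
apply: (@le_trans _ _ (\sum_(t < T) \sum_(k < n | (k < t)%N) b (t - k.+1)%N)).
  by apply: ler_sum => t _; apply: le_trans (window_le t); apply: u_le_window.
rewrite (exchange_big_dep xpredT) //= mulr_natl -[n in _ *+ n]card_ord.
rewrite -sumr_const.
by apply: ler_sum => k _; apply: sum_delayed_le.
Qed.

Lemma sum_sqr_recentred_le (R : realDomainType) (n : nat) (c m : R)
    (v : 'I_n -> R) :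
  n%:R * m = \sum_i v i ->
  \sum_i (c + v i - m) * (c + v i - m) <= n%:R * (c * c) + \sum_i v i * v i.
Proof.
move=> mean_m.
have -> : \sum_i (c + v i - m) * (c + v i - m) =
          \sum_i ((c - m) * (c - m) + 2%:R * (c - m) * v i + v i * v i).
  by apply: eq_bigr => i _; ring.
rewrite !big_split /= sumr_const card_ord -mulr_sumr -mean_m -mulr_natl.
have : 0 <= n%:R * (m * m) :> R by rewrite mulr_ge0 ?ler0n // -expr2 sqr_ge0.
lra.
Qed.

Section SquaredNorm.
Variables (R : realType) (d : nat).
Implicit Types (u v : 'rV[R]_d) (a : R).

Lemma sqnorm_ge0 v : 0 <= sqnorm v.
Proof. by apply: sumr_ge0 => j _; rewrite -expr2 sqr_ge0. Qed.

Lemma sqnorm0 : sqnorm (0 : 'rV[R]_d) = 0.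
Proof. by apply: big1 => j _; rewrite mxE mul0r. Qed.

Lemma sqnormN v : sqnorm (- v) = sqnorm v.
Proof. by apply: eq_bigr => j _; rewrite mxE mulrNN. Qed.

Lemma sqnormZ a v : sqnorm (a *: v) = a ^+ 2 * sqnorm v.
Proof.
by rewrite /sqnorm /dotv mulr_sumr; apply: eq_bigr => j _; rewrite mxE; ring.
Qed.

Lemma enorm_sqr v : enorm v ^+ 2 = sqnorm v.
Proof. by rewrite sqr_sqrtr ?sqnorm_ge0. Qed.

Lemma lipschitz_grad_sqnorm L (g : 'rV[R]_d -> 'rV[R]_d) u v :
  lipschitz_grad L g -> sqnorm (g u - g v) <= L ^+ 2 * sqnorm (u - v).
Proof.
move=> /(_ u v) g_lip; rewrite -!enorm_sqr.
have : 0 <= enorm (g u - g v) by apply: sqrtr_ge0.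
have : 0 <= enorm (u - v) by apply: sqrtr_ge0.
nra.
Qed.

Lemma sum_sqnorm_recentred_le (n : nat) (c : 'rV[R]_d) (v : 'I_n -> 'rV[R]_d) :
  (0 < n)%N ->
  \sum_i sqnorm (c + v i - n%:R^-1 *: \sum_k v k)
    <= n%:R * sqnorm c + \sum_i sqnorm (v i).
Proof.
move=> n_gt0; rewrite /sqnorm /dotv exchange_big [X in _ + X]exchange_big /=.
rewrite mulr_sumr -big_split /=; apply: ler_sum => j _.
under eq_bigr do rewrite !mxE summxE.
apply: sum_sqr_recentred_le.
by rewrite mulrA mulfV ?mul1r ?summxE ?pnatr_eq0 -?lt0n.
Qed.

End SquaredNorm.

Lemma sum_sqnorm_spider_error_le (R : realType) (d n : nat) (L : R)
    (G : 'I_n -> 'rV[R]_d -> 'rV[R]_d) (g x y : 'rV[R]_d) :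
  (0 < n)%N -> (forall i, lipschitz_grad L (G i)) ->
  \sum_i sqnorm (G i y - G i x + g - avg_grad G y)
    <= n%:R * sqnorm (g - avg_grad G x) + n%:R * (L ^+ 2 * sqnorm (y - x)).
Proof.
move=> n_gt0 G_lip.
have recentre i : G i y - G i x + g - avg_grad G y =
    (g - avg_grad G x) + (G i y - G i x) - n%:R^-1 *: \sum_k (G k y - G k x).
  rewrite sumrB scalerBr /avg_grad.
  move: (n%:R^-1 *: \sum_k G k y) (n%:R^-1 *: \sum_k G k x) => a b.
  by apply/rowP => j; rewrite !mxE; ring.
under eq_bigr do rewrite recentre.
apply: le_trans (sum_sqnorm_recentred_le _ _ n_gt0) _; rewrite lerD2l.
rewrite mulr_natl -[in X in _ <= X](card_ord n) -sumr_const.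
by apply: ler_sum => i _; apply: lipschitz_grad_sqnorm.
Qed.

Definition ffun_upd (I : finType) (J : Type) (w : {ffun I -> J}) (s : I) (j : J)
  : {ffun I -> J} := [ffun x => if x == s then j else w x].

(* Shifting coordinate s by v is a bijection of {ffun I -> V}; summing over v,
   the shifts of w at s run through all updates of w at s. *)
Lemma sum_ffun_upd (I : finType) (V : finZmodType) (R : nmodType) (s : I)
    (F : {ffun I -> V} -> R) :
  (\sum_w F w) *+ #|V| = \sum_w \sum_(v : V) F (ffun_upd w s v).
Proof.
pose shift (v : V) (w : {ffun I -> V}) :=
  [ffun x => if x == s then w x + v else w x].
have shift_inj v : injective (shift v).
  move=> w1 w2 /ffunP eq_shift; apply/ffunP => x.
  by have := eq_shift x; rewrite !ffunE; case: eqP => // _; apply: addIr.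
rewrite -sumr_const (eq_bigr (fun v => \sum_w F (shift v w))); last first.
  by move=> v _; rewrite (reindex_inj (shift_inj v)).
rewrite exchange_big /=; apply: eq_bigr => w _.
rewrite [RHS](reindex_inj (addrI (w s))); apply: eq_bigr => v _.
by congr F; apply/ffunP => x; rewrite !ffunE; case: eqP => [->|].
Qed.

Lemma sum_ffun_upd_ord (I : finType) (n : nat) (R : nmodType) (s : I)
    (F : {ffun I -> 'I_n} -> R) : (0 < n)%N ->
  (\sum_w F w) *+ n = \sum_w \sum_(i : 'I_n) F (ffun_upd w s i).
Proof. by case: n F => // n F _; rewrite -(sum_ffun_upd s F) card_ord. Qed.

Section AdaSpiderError.
Variables (R : realType) (d n : nat) (G : 'I_n -> 'rV[R]_d -> 'rV[R]_d).
Variables (x0 : 'rV[R]_d) (beta0 G0 : R).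
Hypotheses (n_gt0 : (0 < n)%N) (beta0_gt0 : 0 < beta0) (G0_gt0 : 0 < G0).

Local Notation state := (ada_state G x0 beta0 G0).
Local Notation xs := (ada_x G x0 beta0 G0).
Local Notation nabla := (ada_nabla G x0 beta0 G0).
Local Notation gamma := (ada_gamma G x0 beta0 G0).
Local Notation err w t := (nabla w t - avg_grad G (xs w t)).

Lemma ada_state_prefix (w1 w2 : nat -> 'I_n) t :
  (forall u, (u <= t)%N -> w1 u = w2 u) -> state w1 t = state w2 t.
Proof.
elim: t => [//|t IHt] eq_w /=.
by rewrite IHt ?eq_w // => u le_ut; apply/eq_w/leqW.
Qed.

Lemma ada_x_succ w t : xs w t.+1 = xs w t - gamma w t *: nabla w t.
Proof.
by rewrite /ada_x /ada_gamma /ada_nabla /=; case: (state w t) => [[]].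
Qed.

Lemma ada_err_restart w t : (t %% n == 0)%N -> err w t = 0.
Proof.
case: t => [_|t]; first exact: subrr.
rewrite /ada_nabla /ada_x /=.
by case: (state w t) => [[x g] S] /= ->; rewrite subrr.
Qed.

Lemma ada_err_succ w t : (t.+1 %% n != 0)%N ->
  err w t.+1 = G (w t.+1) (xs w t.+1) - G (w t.+1) (xs w t) + nabla w t
               - avg_grad G (xs w t.+1).
Proof.
by rewrite /ada_nabla /ada_x /=; case: (state w t) => [[x g] S] /= /negbTE ->.
Qed.

Lemma ada_state_sum_ge0 w t : 0 <= (state w t).2.
Proof.
elim: t => [|t]; first exact: sqnorm_ge0.
rewrite /=; case: (state w t) => [[x g] S] /= S_ge0.
by rewrite addr_ge0 ?sqnorm_ge0.
Qed.

Lemma ada_step_gt0 S : 0 <= S -> 0 < ada_step n beta0 G0 S.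
Proof.
move=> S_ge0; rewrite /ada_step div1r invr_gt0 !mulr_gt0 ?sqrtr_gt0 ?ltr0n //.
by rewrite ltr_wpDr ?mulr_gt0 ?exprn_gt0 ?sqrtr_gt0 ?ltr0n.
Qed.

Lemma ada_step_le S1 S2 :
  0 <= S1 -> S1 <= S2 -> ada_step n beta0 G0 S2 <= ada_step n beta0 G0 S1.
Proof.
move=> S1_ge0 le_S12; have S2_ge0 := le_trans S1_ge0 le_S12.
have := ada_step_gt0 S1_ge0; have := ada_step_gt0 S2_ge0.
rewrite /ada_step !div1r !invr_gt0 => step2_gt0 step1_gt0.
rewrite lef_pV2 ?posrE // ler_wpM2l ?ler_wsqrtr ?lerD2l //.
by rewrite mulr_ge0 ?sqrtr_ge0 ?ltW.
Qed.

Lemma ada_gamma_gt0 w t : 0 < gamma w t.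
Proof. exact/ada_step_gt0/ada_state_sum_ge0. Qed.

Lemma ada_gamma_succ_le w t : gamma w t.+1 <= gamma w t.
Proof.
rewrite /ada_gamma /=; have := ada_state_sum_ge0 w t.
case: (state w t) => [[x g] S] /= S_ge0.
by rewrite ada_step_le ?lerDl ?sqnorm_ge0.
Qed.

Lemma sum_ada_err_resample_le L (w : nat -> 'I_n) (w' : 'I_n -> nat -> 'I_n) t :
  (forall i, lipschitz_grad L (G i)) -> (t.+1 %% n != 0)%N ->
  (forall i u, (u <= t)%N -> w' i u = w u) -> (forall i, w' i t.+1 = i) ->
  \sum_i gamma (w' i) t * sqnorm (err (w' i) t.+1)
    <= n%:R * (gamma w t * sqnorm (err w t)
               + L ^+ 2 * (gamma w t ^+ 3 * sqnorm (nabla w t))).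
Proof.
move=> G_lip t1_mod w'_prefix w'_last.
have same_state i : state (w' i) t = state w t.
  by apply: ada_state_prefix => u /w'_prefix.
have same_x i : xs (w' i) t = xs w t by rewrite /ada_x same_state.
have same_nabla i : nabla (w' i) t = nabla w t by rewrite /ada_nabla same_state.
have same_gamma i : gamma (w' i) t = gamma w t by rewrite /ada_gamma same_state.
under eq_bigr do
  rewrite ada_err_succ // w'_last ada_x_succ same_x same_nabla same_gamma.
rewrite -mulr_sumr (le_trans (ler_wpM2l (ltW (ada_gamma_gt0 w t))
  (sum_sqnorm_spider_error_le _ _ _ n_gt0 G_lip))) //.
rewrite addrAC subrr add0r sqnormN sqnormZ; lra.
Qed.

Local Notation pick := (pick_idx n_gt0).

Lemma pick_idx_upd_lt T (w : {ffun 'I_T -> 'I_n}) (s : 'I_T) i u :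
  (u < s)%N -> pick (ffun_upd w s i) u = pick w u.
Proof.
rewrite /pick_idx; case: insubP => [j _ <-|//] lt_js.
by rewrite ffunE; case: eqP => // eq_js; rewrite eq_js ltnn in lt_js.
Qed.

Lemma pick_idx_upd_eq T (w : {ffun 'I_T -> 'I_n}) (s : 'I_T) i :
  pick (ffun_upd w s i) (val s) = i.
Proof. by rewrite /pick_idx valK ffunE eqxx. Qed.

(* n^T times E[gamma_t |nabla_t - grad f(x_t)|^2] and
   n^T times E[gamma_t^3 |nabla_t|^2] *)
Definition ada_err_total T t := \sum_(w : {ffun 'I_T -> 'I_n})
  gamma (pick w) t * sqnorm (err (pick w) t).

Definition ada_drift_total T t := \sum_(w : {ffun 'I_T -> 'I_n})
  gamma (pick w) t ^+ 3 * sqnorm (nabla (pick w) t).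

Lemma ada_drift_total_ge0 T t : 0 <= ada_drift_total T t.
Proof.
apply: sumr_ge0 => w _.
by rewrite mulr_ge0 ?exprn_ge0 ?sqnorm_ge0 ?ltW ?ada_gamma_gt0.
Qed.

Lemma ada_err_total_restart T t : (t %% n == 0)%N -> ada_err_total T t = 0.
Proof.
by move=> t_mod; apply: big1 => w _; rewrite ada_err_restart ?sqnorm0 ?mulr0.
Qed.

Lemma ada_err_total_succ_le L T t :
  (forall i, lipschitz_grad L (G i)) -> (t.+1 < T)%N -> (t.+1 %% n != 0)%N ->
  ada_err_total T t.+1 <= ada_err_total T t + L ^+ 2 * ada_drift_total T t.
Proof.
move=> G_lip t1_lt t1_mod; pose s := Ordinal t1_lt.
apply: (@le_trans _ _ (\sum_(w : {ffun 'I_T -> 'I_n})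
                         gamma (pick w) t * sqnorm (err (pick w) t.+1))).
  by apply: ler_sum => w _; rewrite ler_wpM2r ?sqnorm_ge0 ?ada_gamma_succ_le.
rewrite -(ler_pM2l (_ : 0 < n%:R)) ?ltr0n // mulr_natl (sum_ffun_upd_ord s) //.
apply: le_trans (ler_sum _ (fun w _ => sum_ada_err_resample_le (w := pick w)
  (w' := fun i => pick (ffun_upd w s i)) G_lip t1_mod
  (fun i u => @pick_idx_upd_lt T w s i u) (pick_idx_upd_eq w s))) _.
by rewrite -mulr_sumr big_split /= -mulr_sumr.
Qed.

End AdaSpiderError.

Theorem lemma5 (R : realType) (d n T : nat) (hn : (0 < n)%N) (hT : (0 < T)%N)
    (L : R) (f : 'I_n -> 'rV[R]_d -> R) (G : 'I_n -> 'rV[R]_d -> 'rV[R]_d)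
    (x0 : 'rV[R]_d) (beta0 G0 : R) :
  (forall i, is_gradient (f i) (G i)) ->
  (forall i, lipschitz_grad L (G i)) ->
  0 < beta0 -> 0 < G0 ->
  Eunif (fun omega : {ffun 'I_T -> 'I_n} =>
    \sum_(t < T)
      ada_gamma G x0 beta0 G0 (pick_idx hn omega) t *
      sqnorm (ada_nabla G x0 beta0 G0 (pick_idx hn omega) t
              - avg_grad G (ada_x G x0 beta0 G0 (pick_idx hn omega) t)))
  <= L ^+ 2 * n%:R *
     Eunif (fun omega : {ffun 'I_T -> 'I_n} =>
       \sum_(t < T)
         ada_gamma G x0 beta0 G0 (pick_idx hn omega) t ^+ 3 *
         sqnorm (ada_nabla G x0 beta0 G0 (pick_idx hn omega) t)).
Proof.
(* Only the Lipschitz bound on the G i matters, not that they are gradients. *)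
move=> _ G_lip beta0_gt0 G0_gt0.
rewrite /Eunif mulrA ler_wpM2r ?invr_ge0 ?ler0n //.
rewrite exchange_big [in leRHS]exchange_big /=.
rewrite (mulrC (L ^+ 2)) -mulrA mulr_sumr.
apply: (sum_restarted_le (u := ada_err_total G x0 beta0 G0 hn T)
  (b := fun t => L ^+ 2 * ada_drift_total G x0 beta0 G0 hn T t)).
- exact: hn.
- by move=> t; rewrite mulr_ge0 ?sqr_ge0 ?ada_drift_total_ge0.
- by move=> t /ada_err_total_restart->.
- by move=> t; apply: ada_err_total_succ_le.
Qed.
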